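(* Let $\lambda\ge1$, let $x^*$ be an optimal solution to $(P_\lambda)$ (assumed feasible), let $y^*$ be an optimal solution to $\max_{y\in\mathbb{R}^{\mathcal{S}}_{\ge0}}g_\lambda(y)$, and let $\mathcal{L}$ be a laminar decomposition of $x^*$. Then for every $L\in\mathcal{L}$, all edges of $\mathrm{supp}(x^* )\cap E^{\mathcal{L}}_L$ have the same $c^{y^*}$-cost.
   Context: Setting: $G=(V,E)$ undirected connected graph, costs $c_e\ge0$, a chain $\mathcal{S}$ of node sets $S_1\subsetneq\dots\subsetneq S_\ell\subsetneq V$, integers $b_S$. $E(S)$ = edges with both ends in $S$, $\delta(S)$ = edges with exactly one end in $S$, $z(F)=\sum_{e\in F}z_e$, $\mathrm{supp}(z)=\{e:z_e>0\}$. $P_{ST}(G)=\{x\in\mathbb{R}^E_{\ge0}: x(E(S))\le|S|-1\ \forall\emptyset\ne S\subsetneq V,\ x(E)=|V|-1\}$. $(P_\lambda)$: minimize $\sum_ec_ex_e$ over $x\in P_{ST}(G)$ with $x(\delta(S))\le\lambda b_S$ for all $S\in\mathcal{S}$. For $y\in\mathbb{R}^{\mathcal{S}}$, $c^y_e=c_e+\sum_{S\in\mathcal{S}:e\in\delta(S)}y_S$ and $g_\lambda(y)=\min_{x\in P_{ST}(G)}\big(\sum_ec^y_ex_e-\lambda\sum_{S}b_Sy_S\big)$. A laminar decomposition of $x\in P_{ST}(G)$ is an inclusion-wise maximal laminar family of nonempty sets $A\subseteq V$ with $x(E(A))=|A|-1$. For $L\in\mathcal{L}$, $E^{\mathcal{L}}_L$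 is the edge set of the graph obtained from $(L,E(L))$ by contracting the maximal members of $\mathcal{L}$ strictly contained in $L$ (i.e., edges of $E(L)$ not contained in any such member). *)

From HB Require Import structures.
From mathcomp Require Import all_boot all_order all_algebra.
From mathcomp Require classical_sets.
From mathcomp Require Import reals.
Set Implicit Arguments. Unset Strict Implicit. Unset Printing Implicit Defensive.
Import Order.TTheory GRing.Theory Num.Theory.
Local Open Scope ring_scope.

Section Defs.
Variables (R : realType) (V E : finType) (src dst : E -> V).

(* undirected graph: edge e joins src e and dst e (parallel edges allowed) *)
Definition loopless : Prop := forall e, src e != dst e.
Definition adj : rel V := fun a b =>
  [exists e, ((src e == a) && (dst e == b)) || ((dst e == a) && (src e == b))].
Definition connected_graph : Prop := forall a b, connect adj a b.

Definition Ein (A : {set V}) : {set E} :=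
  [set e | (src e \in A) && (dst e \in A)].
Definition delta (A : {set V}) : {set E} :=
  [set e | (src e \in A) != (dst e \in A)].

Definition zsum (z : E -> R) (F : {set E}) : R := \sum_(e in F) z e.

Definition in_PST (x : E -> R) : Prop :=
  (forall e, 0 <= x e) /\
  (forall A : {set V}, A != set0 -> A != setT ->
      zsum x (Ein A) <= (#|A|)%:R - 1) /\
  zsum x setT = (#|V|)%:R - 1.

Definition cost (c x : E -> R) : R := \sum_e c e * x e.

Definition is_chain (l : nat) (S : 'I_l -> {set V}) : Prop :=
  (forall i j : 'I_l, (i < j)%N -> S i \proper S j) /\
  (forall i, S i \proper setT).

Definition feasible_P (l : nat) (S : 'I_l -> {set V}) (b : 'I_l -> int)
    (lam : R) (x : E -> R) : Prop :=
  in_PST x /\ forall i, zsum x (delta (S i)) <= lam * (b i)%:~R.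

Definition optimal_P (c : E -> R) (l : nat) (S : 'I_l -> {set V})
    (b : 'I_l -> int) (lam : R) (x : E -> R) : Prop :=
  feasible_P S b lam x /\
  forall x', feasible_P S b lam x' -> cost c x <= cost c x'.

Definition cy (c : E -> R) (l : nat) (S : 'I_l -> {set V}) (y : 'I_l -> R)
    (e : E) : R :=
  c e + \sum_(i < l | e \in delta (S i)) y i.

(* g_lambda(y) = min over P_ST (taken as inf; the min is attained) *)
Definition g_lam (c : E -> R) (l : nat) (S : 'I_l -> {set V})
    (b : 'I_l -> int) (lam : R) (y : 'I_l -> R) : R :=
  inf (fun r : R => exists x : E -> R, in_PST x /\
        r = cost (cy c S y) x - lam * \sum_(i < l) (b i)%:~R * y i).

Definition optimal_dual (c : E -> R) (l : nat) (S : 'I_l -> {set V})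
    (b : 'I_l -> int) (lam : R) (y : 'I_l -> R) : Prop :=
  (forall i, 0 <= y i) /\
  forall y' : 'I_l -> R, (forall i, 0 <= y' i) ->
    g_lam c S b lam y' <= g_lam c S b lam y.

Definition tight (x : E -> R) (A : {set V}) : bool :=
  (A != set0) && (zsum x (Ein A) == (#|A|)%:R - 1).

Definition laminar (F : {set {set V}}) : bool :=
  [forall A in F, forall B in F,
     [|| A \subset B, B \subset A | [disjoint A & B]]].

Definition valid_family (x : E -> R) (F : {set {set V}}) : bool :=
  laminar F && [forall A in F, tight x A].

Definition laminar_decomposition (x : E -> R) (L : {set {set V}}) : Prop :=
  valid_family x L /\
  forall F, valid_family x F -> L \subset F -> F = L.

Definition child (L : {set {set V}}) (A M : {set V}) : bool :=
  [&& M \in L, M \proper A &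
      ~~ [exists N in L, (M \proper N) && (N \proper A)]].

Definition EL (L : {set {set V}}) (A : {set V}) : {set E} :=
  [set e in Ein A | [forall M, child L A M ==> (e \notin Ein M)]].

End Defs.

(* Set x' := xs + eta (1_e - 1_f). Every tight set of xs contains both e and f or
   neither: for members of L this is the definition of E^L_A, and any other tight
   set is uncrossed against L, since tight sets are closed under intersection and
   union and the edges with xs > 0 then satisfy the modular identity. Hence x' stays
   in P_ST for some eta > 0. Strong duality, obtained from Farkas' lemma by
   Fourier-Motzkin elimination, gives
     cost xs <= g(ys) <= lagrangian ys x' = lagrangian ys xs + eta (c^ys_e - c^ys_f)
             <= cost xs + eta (c^ys_e - c^ys_f),
   so c^ys_f <= c^ys_e, and symmetrically. *)

From HB Require Import structures.
From mathcomp Require Import all_boot all_order all_algebra.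
From mathcomp Require classical_sets.
From mathcomp Require Import reals.
From mathcomp Require Import ring lra.
Import Order.TTheory GRing.Theory Num.Theory.
Local Open Scope ring_scope.
Set Implicit Arguments. Unset Strict Implicit. Unset Printing Implicit Defensive.

Section LinearInequalities.
Variables (R : realFieldType) (T : finType).

Definition dot (a x : T -> R) : R := \sum_k a k * x k.

Lemma dotNl (a x : T -> R) : dot (fun k => - a k) x = - dot a x.
Proof. by rewrite /dot -sumrN; apply: eq_bigr => k _; rewrite mulNr. Qed.

Lemma dot0l (x : T -> R) : dot (fun _ => 0) x = 0.
Proof. by rewrite /dot big1 // => k _; rewrite mul0r. Qed.

Lemma sum_pred1_mul (I : finType) (i : I) (r : R) (F : I -> R) :
  \sum_m (if m == i then r else 0) * F m = r * F i.
Proof. by rewrite (bigD1 i) //= eqxx big1 ?addr0 // => j /negbTE ->; rewrite mul0r. Qed.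

Lemma sum_comb_mul (I J : finType) (w : J -> R) (g : J -> I -> R) (F : I -> R) :
  \sum_i (\sum_p w p * g p i) * F i = \sum_p w p * (\sum_i g p i * F i).
Proof.
under eq_bigr do rewrite mulr_suml.
rewrite exchange_big /=; apply: eq_bigr => p _; rewrite mulr_sumr.
by apply: eq_bigr => i _; rewrite mulrA.
Qed.

Lemma exists_between (I : finType) (P Q : pred I) (lo up : I -> R) :
  (forall i j, P i -> Q j -> lo i <= up j) ->
  exists t, (forall i, P i -> lo i <= t) /\ (forall j, Q j -> t <= up j).
Proof.
move=> lo_up; have [/existsP[i0 Pi0]|noP] := boolP [exists i, P i].
  have [i Pi maxi] := arg_maxP lo Pi0.
  by exists (lo i); split=> // j Qj; apply: lo_up.
have [/existsP[j0 Qj0]|noQ] := boolP [exists j, Q j].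
  have [j Qj minj] := arg_minP up Qj0.
  by exists (up j); split=> // i Pi; apply: lo_up.
exists 0; split=> [i Pi|j Qj]; [case/existsP: noP|case/existsP: noQ]; by eexists; eauto.
Qed.

Lemma exists_pos_lower_bound (I : finType) (P : pred I) (s : I -> R) :
  (forall i, P i -> 0 < s i) -> exists2 eta, 0 < eta & forall i, P i -> eta <= s i.
Proof.
move=> s_gt0; have [/existsP[i0 Pi0]|noP] := boolP [exists i, P i].
  by have [i Pi mini] := arg_minP s Pi0; exists (s i) => //; apply: s_gt0.
by exists 1 => // i Pi; case/existsP: noP; exists i.
Qed.

Section FourierMotzkinStep.
Variables (I : finType) (a : I -> T -> R) (b : I -> R) (v : T).

(* Pairing a row with positive and a row with negative [v]-coefficient, and
   keeping the rows with zero [v]-coefficient, eliminates the variable [v]. *)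
Definition fm_weight (p : I * I) (m : I) : R :=
  let: (i, j) := p in
  if (0 < a i v) && (a j v < 0) then
    (if m == i then - a j v else 0) + (if m == j then a i v else 0)
  else if a i v == 0 then (if m == i then 1 else 0) else 0.

Definition fm_row (p : I * I) (k : T) : R := \sum_m fm_weight p m * a m k.
Definition fm_rhs (p : I * I) : R := \sum_m fm_weight p m * b m.

Lemma fm_weight_ge0 p m : 0 <= fm_weight p m.
Proof.
case: p => i j /=; case: ifP => [/andP[ai_gt0 aj_lt0]|_].
  by apply: addr_ge0; case: ifP => // _; rewrite ?oppr_ge0 ltW.
by case: ifP => //; case: ifP.
Qed.

Lemma fm_weight_sum i j (F : I -> R) :
  \sum_m fm_weight (i, j) m * F m =
  if (0 < a i v) && (a j v < 0) then - a j v * F i + a i v * F j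
  else if a i v == 0 then F i else 0.
Proof.
rewrite /fm_weight; case: ifP => _.
  by under eq_bigr do rewrite mulrDl; rewrite big_split /= !sum_pred1_mul.
case: ifP => _; first by rewrite sum_pred1_mul mul1r.
by rewrite big1 // => m _; rewrite mul0r.
Qed.

Lemma fm_row_eliminated p : fm_row p v = 0.
Proof.
case: p => i j; rewrite /fm_row fm_weight_sum.
case: ifP => _; first by rewrite mulNr mulrC addNr.
by case: ifP => // /eqP.
Qed.

Lemma fm_feasible_lift :
  (exists x, forall p, dot (fm_row p) x <= fm_rhs p) ->
  exists x, forall i, dot (a i) x <= b i.
Proof.
case=> x x_feas.
pose x0 k := if k == v then 0 else x k.
pose r m := b m - dot (a m) x0.
have dot_row_x0 p : dot (fm_row p) x0 = dot (fm_row p) x.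
  apply: eq_bigr => k _; rewrite /x0; case: eqP => [->|//].
  by rewrite fm_row_eliminated !mul0r.
have comb_r_ge0 p : 0 <= \sum_m fm_weight p m * r m.
  have -> : \sum_m fm_weight p m * r m = fm_rhs p - dot (fm_row p) x0.
    rewrite /fm_rhs /fm_row /dot sum_comb_mul -sumrB.
    by apply: eq_bigr => m _; rewrite mulrBr.
  by rewrite dot_row_x0 subr_ge0.
have ratio_le i j : a i v < 0 -> 0 < a j v -> r i / a i v <= r j / a j v.
  move=> ai_lt0 aj_gt0; have := comb_r_ge0 (j, i).
  rewrite fm_weight_sum aj_gt0 ai_lt0 /= => comb_ge0.
  rewrite -subr_ge0; have -> : r j / a j v - r i / a i v =
      (- a i v * r j + a j v * r i) / (a j v * - a i v) :> R.
    by field; rewrite (lt0r_neq0 aj_gt0) (ltr0_neq0 ai_lt0).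
  apply: divr_ge0 => //; apply: mulr_ge0; rewrite ?oppr_ge0; exact: ltW.
have [t [t_ge t_le]] := @exists_between I (fun m => a m v < 0) (fun m => 0 < a m v)
  (fun m => r m / a m v) (fun m => r m / a m v) ratio_le.
exists (fun k => if k == v then t else x k) => m.
have -> : dot (a m) (fun k => if k == v then t else x k) = a m v * t + dot (a m) x0.
  rewrite /dot (bigD1 v) // [in RHS](bigD1 v) //= /x0 !eqxx mulr0 add0r; congr (_ + _).
  by apply: eq_bigr => k /negbTE ->.
rewrite -lerBrDr; case: (ltrgt0P (a m v)) => am.
- by have := t_le m am; rewrite ler_pdivlMr // mulrC.
- by have := t_ge m am; rewrite ler_ndivrMr // mulrC.
- by have := comb_r_ge0 (m, m); rewrite fm_weight_sum am ltxx /= eqxx mul0r.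
Qed.

End FourierMotzkinStep.

Lemma farkas_on (D : {set T}) (I : finType) (a : I -> T -> R) (b : I -> R) :
  (forall i k, k \notin D -> a i k = 0) ->
  ~ (exists x, forall i, dot (a i) x <= b i) ->
  exists w : I -> R, [/\ forall i, 0 <= w i,
    forall k, \sum_i w i * a i k = 0 & \sum_i w i * b i < 0].
Proof.
have [n] := ubnP #|D|; elim: n D I a b => // n IH D I a b D_lt a_off infeas.
have [D0|[v vD]] := set_0Vmem D.
  have [/forallP b_ge0|/forallPn[i0]] := boolP [forall i, 0 <= b i].
    case: infeas; exists (fun _ => 0) => i.
    by rewrite /dot big1 ?b_ge0 // => k _; rewrite mulr0.
  rewrite -ltNge => bi0_lt0.
  exists (fun j => if j == i0 then 1 else 0); split.
  - by move=> j; case: ifP.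
  - by move=> k; rewrite sum_pred1_mul mul1r a_off // D0 inE.
  - by rewrite sum_pred1_mul mul1r.
have D_v_lt : (#|D :\ v| < n)%N by rewrite (cardsD1 v D) vD in D_lt.
have row_off p k : k \notin D :\ v -> fm_row a v p k = 0.
  rewrite !inE negb_and negbK => /orP[/eqP->|kD]; first exact: fm_row_eliminated.
  by rewrite /fm_row big1 // => m _; rewrite a_off // mulr0.
have infeas' : ~ exists x, forall p, dot (fm_row a v p) x <= fm_rhs a b v p.
  by move/fm_feasible_lift.
have [w' [w'_ge0 w'_a w'_b]] := IH _ _ _ _ D_v_lt row_off infeas'.
exists (fun i => \sum_p w' p * fm_weight a v p i); split.
- by move=> i; apply: sumr_ge0 => p _; apply: mulr_ge0 => //; apply: fm_weight_ge0.
- by move=> k; rewrite sum_comb_mul; apply: w'_a.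
- by rewrite sum_comb_mul.
Qed.

Lemma farkas (I : finType) (a : I -> T -> R) (b : I -> R) :
  ~ (exists x, forall i, dot (a i) x <= b i) ->
  exists w : I -> R, [/\ forall i, 0 <= w i,
    forall k, \sum_i w i * a i k = 0 & \sum_i w i * b i < 0].
Proof. by apply: (@farkas_on setT) => i k; rewrite inE. Qed.

Lemma lagrange_multipliers (J K : finType) (aJ : J -> T -> R) (bJ : J -> R)
    (aK : K -> T -> R) (bK : K -> R) (a0 : T -> R) (beta : R) :
  (exists x0, (forall j, dot (aJ j) x0 <= bJ j) /\ forall k, dot (aK k) x0 <= bK k) ->
  ~ (exists x, [/\ forall j, dot (aJ j) x <= bJ j, forall k, dot (aK k) x <= bK k
                 & dot a0 x <= beta]) ->
  exists y : K -> R, (forall k, 0 <= y k) /\ forall x, (forall j, dot (aJ j) x <= bJ j) ->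
    beta < dot a0 x + \sum_k y k * (dot (aK k) x - bK k).
Proof.
move=> [x0 [x0J x0K]] infeas.
pose a (i : unit + (J + K)) := match i with
  | inl _ => a0 | inr (inl j) => aJ j | inr (inr k) => aK k end.
pose b (i : unit + (J + K)) := match i with
  | inl _ => beta | inr (inl j) => bJ j | inr (inr k) => bK k end.
have [|w [w_ge0 w_a w_b]] := @farkas _ a b.
  by case=> x x_feas; apply: infeas; exists x;
    split=> [j|k|]; [apply: (x_feas (inr (inl j)))|apply: (x_feas (inr (inr k)))|
                     apply: (x_feas (inl tt))].
pose sJ x := \sum_j w (inr (inl j)) * (dot (aJ j) x - bJ j).
pose sK x := \sum_k w (inr (inr k)) * (dot (aK k) x - bK k).
have combination_gt0 x : 0 < w (inl tt) * (dot a0 x - beta) + sJ x + sK x.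
  have -> : w (inl tt) * (dot a0 x - beta) + sJ x + sK x =
      \sum_i w i * (dot (a i) x - b i).
    rewrite !big_sumType /= -addrA; congr (_ + _).
    by rewrite (big_pred1 tt) //; case.
  under eq_bigr do rewrite mulrBr.
  rewrite sumrB /dot -sum_comb_mul big1 ?add0r ?oppr_gt0 // => k _.
  by rewrite w_a mul0r.
have sJ_le0 x : (forall j, dot (aJ j) x <= bJ j) -> sJ x <= 0.
  by move=> xJ; apply: sumr_le0 => j _; rewrite mulr_ge0_le0 // subr_le0.
have sK_x0_le0 : sK x0 <= 0.
  by apply: sumr_le0 => k _; rewrite mulr_ge0_le0 // subr_le0.
have w0_gt0 : 0 < w (inl tt).
  rewrite lt_def w_ge0 andbT; apply: contraTneq (combination_gt0 x0) => ->.
  by rewrite mul0r add0r -leNgt; have := sJ_le0 x0 x0J; lra.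
exists (fun k => w (inr (inr k)) / w (inl tt)); split=> [k|x xJ].
  by rewrite divr_ge0 // ltW.
have := combination_gt0 x; have := sJ_le0 x xJ => sJx_le0 comb_gt0.
rewrite -subr_gt0 -(pmulr_rgt0 _ w0_gt0).
have -> : \sum_k w (inr (inr k)) / w (inl tt) * (dot (aK k) x - bK k) =
    sK x / w (inl tt).
  by rewrite /sK mulr_suml; apply: eq_bigr => k _; rewrite mulrAC.
rewrite mulrBr mulrDr mulrCA divff ?gt_eqF // mulr1.
move: comb_gt0; rewrite mulrBr; lra.
Qed.

End LinearInequalities.

Section SpanningTreeLP.
Variables (R : realType) (V E : finType) (src dst : E -> V).
Local Notation Ein := (Ein src dst).
Local Notation delta := (delta src dst).
Local Notation in_PST := (in_PST src dst).

Definition ind (F : {set E}) (e : E) : R := (e \in F)%:R.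

Lemma zsum_dot (x : E -> R) F : zsum x F = dot (ind F) x.
Proof.
rewrite /zsum /dot big_mkcond /=; apply: eq_bigr => e _.
by rewrite /ind; case: (e \in F); rewrite ?mul1r ?mul0r.
Qed.

Definition shift_mass (x : E -> R) (eta : R) (e f : E) (g : E) : R :=
  x g + eta * (ind [set e] g - ind [set f] g).

Lemma dot_ind_set1 (a : E -> R) e : dot a (ind [set e]) = a e.
Proof.
rewrite /dot (bigD1 e) //= big1 => [|g /negbTE ge]; rewrite /ind inE.
  by rewrite eqxx mulr1 addr0.
by rewrite ge mulr0.
Qed.

Lemma dot_shift_mass (a x : E -> R) eta e f :
  dot a (shift_mass x eta e f) = dot a x + eta * (a e - a f).
Proof.
rewrite -[a e](dot_ind_set1 a e) -[a f](dot_ind_set1 a f) /dot -sumrB mulr_sumr.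
by rewrite -big_split; apply: eq_bigr => g _; rewrite /shift_mass /=; ring.
Qed.

Definition pst_row (j : E + {set V} + bool) : E -> R :=
  match j with
  | inl (inl e) => fun k => - ind [set e] k
  | inl (inr A) => if (A != set0) && (A != setT) then ind (Ein A) else fun _ => 0
  | inr true => ind setT
  | inr false => fun k => - ind setT k
  end.

Definition pst_rhs (j : E + {set V} + bool) : R :=
  match j with
  | inl (inl e) => 0
  | inl (inr A) => if (A != set0) && (A != setT) then (#|A|)%:R - 1 else 0
  | inr true => (#|V|)%:R - 1
  | inr false => - ((#|V|)%:R - 1)
  end.

Lemma in_PST_rows (x : E -> R) :
  in_PST x <-> forall j, dot (pst_row j) x <= pst_rhs j.
Proof.
have dot_set1 e : dot (ind [set e]) x = x e by rewrite -zsum_dot /zsum big_set1.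
split=> [[x_ge0 [x_Ein x_E]] [[e|A]|[]] /=|x_rows].
- by rewrite dotNl dot_set1 oppr_le0.
- by case: ifP => [/andP[A0 AT]|_]; rewrite ?dot0l // -zsum_dot x_Ein.
- by rewrite -zsum_dot x_E.
- by rewrite dotNl -zsum_dot x_E.
split; [|split].
- by move=> e; have := x_rows (inl (inl e)); rewrite /= dotNl dot_set1 oppr_le0.
- by move=> A A0 AT; have := x_rows (inl (inr A)); rewrite /= A0 AT -zsum_dot.
- have := x_rows (inr true); have := x_rows (inr false).
  rewrite /= dotNl -zsum_dot lerN2 => sum_ge sum_le; exact/le_anti/andP.
Qed.

Variables (c : E -> R) (l : nat) (S : 'I_l -> {set V}) (b : 'I_l -> int) (lam : R).
Local Notation cy := (cy src dst c S).
Local Notation feasible_P := (feasible_P src dst S b lam).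
Local Notation optimal_P := (optimal_P src dst c S b lam).
Local Notation g_lam := (g_lam src dst c S b lam).

Definition lagrangian (y : 'I_l -> R) (x : E -> R) : R :=
  cost (cy y) x - lam * \sum_i (b i)%:~R * y i.

Lemma lagrangianE y x :
  lagrangian y x = cost c x + \sum_i y i * (zsum x (delta (S i)) - lam * (b i)%:~R).
Proof.
rewrite /lagrangian /cost /cy; under eq_bigr do rewrite mulrDl.
rewrite big_split /= -addrA; congr (_ + _).
under [RHS]eq_bigr do rewrite mulrBr.
rewrite sumrB mulr_sumr; congr (_ - _); last by apply: eq_bigr => i _; ring.
under eq_bigr do rewrite big_mkcond /= mulr_suml.
rewrite exchange_big /=; apply: eq_bigr => i _.
rewrite mulr_sumr [in RHS]big_mkcond /=; apply: eq_bigr => e _.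
by case: ifP; rewrite ?mul0r ?mulr0.
Qed.

Lemma lagrangian_shift_mass y x eta e f :
  lagrangian y (shift_mass x eta e f) = lagrangian y x + eta * (cy y e - cy y f).
Proof. by rewrite /lagrangian /cost -!/(dot _ _) dot_shift_mass addrAC. Qed.

Lemma lagrangian_le_cost y x :
  (forall i, 0 <= y i) -> feasible_P x -> lagrangian y x <= cost c x.
Proof.
move=> y_ge0 [_ x_deg]; rewrite lagrangianE gerDl.
by apply: sumr_le0 => i _; rewrite mulr_ge0_le0 // subr_le0.
Qed.

Lemma lagrangian_gt_opt xs eps : optimal_P xs -> 0 < eps ->
  exists y : 'I_l -> R, (forall i, 0 <= y i) /\
    forall x, in_PST x -> cost c xs - eps < lagrangian y x.
Proof.
move=> [[xs_PST xs_deg] xs_opt] eps_gt0.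
have [||y [y_ge0 y_lt]] := @lagrange_multipliers _ _ _ _ pst_row pst_rhs
    (fun i => ind (delta (S i))) (fun i => lam * (b i)%:~R) c (cost c xs - eps).
- exists xs; split; first exact/in_PST_rows.
  by move=> i; rewrite -zsum_dot.
- case=> x [x_rows x_deg x_cost].
  have x_feas : feasible_P x by split=> [|i]; [apply/in_PST_rows|rewrite zsum_dot].
  by have := xs_opt x x_feas; rewrite [cost c x]/cost -/(dot c x); lra.
exists y; split=> // x /in_PST_rows/y_lt; rewrite lagrangianE [cost c x]/cost -/(dot c x).
by under [in X in _ -> _ < X]eq_bigr do rewrite zsum_dot.
Qed.

Lemma g_lam_le_lagrangian y x : (forall e, 0 <= c e) -> (forall i, 0 <= y i) ->
  in_PST x -> g_lam y <= lagrangian y x.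
Proof.
move=> c_ge0 y_ge0 x_PST; apply: ge_inf; last by exists x.
exists (- (lam * \sum_i (b i)%:~R * y i)) => r [x' [[x'_ge0 _] ->]].
rewrite /lagrangian lerBrDr addrC subrr; apply: sumr_ge0 => e _.
by rewrite mulr_ge0 // addr_ge0 // sumr_ge0.
Qed.

Lemma opt_le_g_lam xs ys :
  optimal_P xs -> optimal_dual src dst c S b lam ys -> cost c xs <= g_lam ys.
Proof.
move=> xs_opt [_ ys_opt]; apply/ler_addgt0Pr => eps eps_gt0; rewrite -lerBlDr.
have [y [y_ge0 y_gt]] := lagrangian_gt_opt xs_opt eps_gt0.
apply: le_trans (ys_opt y y_ge0); apply: lb_le_inf.
  by exists (lagrangian y xs), xs; split=> //; exact: xs_opt.1.1.
by move=> r [x [x_PST ->]]; exact/ltW/y_gt.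
Qed.

End SpanningTreeLP.

Section Crossing.
Variable V : finType.
Implicit Types A B M N T : {set V}.

Definition crosses A B : bool :=
  [&& ~~ (A \subset B), ~~ (B \subset A) & ~~ [disjoint A & B]].

Lemma crosses_setI_laminar T N M :
  [|| N \subset M, M \subset N | [disjoint N & M]] ->
  crosses (T :&: N) M -> crosses T M.
Proof.
move=> NM /and3P[TNM MTN TNdM]; case/or3P: NM => [sNM|sMN|dNM].
- by case/negP: TNM; rewrite subIset // sNM orbT.
- apply/and3P; split.
  + by apply: contra TNM => sTM; rewrite subIset ?sTM.
  + by apply: contra MTN => sMT; rewrite subsetI sMT sMN.
  + by apply: contra TNdM; apply: disjointWl; apply: subsetIl.
- case/negP: TNdM; rewrite disjoint_sym (disjointWr (subsetIr T N)) //.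
  by rewrite disjoint_sym.
Qed.

Lemma crosses_setU_laminar T N M : ~~ [disjoint T & N] ->
  [|| N \subset M, M \subset N | [disjoint N & M]] ->
  crosses (T :|: N) M -> crosses T M.
Proof.
rewrite -setI_eq0 => /set0Pn[v]; rewrite inE => /andP[vT vN] NM.
case/and3P=> TNM MTN TNdM; case/or3P: NM => [sNM|sMN|dNM].
- apply/and3P; split.
  + by apply: contra TNM => sTM; rewrite subUset sTM.
  + by apply: contra MTN => sMT; rewrite (subset_trans sMT) ?subsetUl.
  + by apply/negP => dTM; have := disjointFr dTM vT; rewrite (subsetP sNM).
- by case/negP: MTN; rewrite (subset_trans sMN) ?subsetUr.
- apply/and3P; split.
  + by apply/negP => sTM; have := disjointFr dNM vN; rewrite (subsetP sTM).
  + by apply: contra MTN => sMT; rewrite (subset_trans sMT) ?subsetUl.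
  + apply: contra TNdM => dTM; rewrite -setI_eq0 setIUl (disjoint_setI0 dTM).
    by rewrite (disjoint_setI0 dNM) setU0.
Qed.

Lemma crosses_setIr T N : ~~ crosses (T :&: N) N.
Proof. by rewrite /crosses subsetIr. Qed.

Lemma crosses_setUr T N : ~~ crosses (T :|: N) N.
Proof. by rewrite /crosses subsetUr andbF. Qed.

End Crossing.

Section TightSets.
Variables (R : realType) (V E : finType) (src dst : E -> V).
Local Notation Ein := (Ein src dst).
Local Notation in_PST := (in_PST src dst).
Local Notation tight := (tight src dst).
Local Notation ind := (@ind R E).
Implicit Types A B M N T : {set V}.

Lemma Ein_subset A B : A \subset B -> Ein A \subset Ein B.
Proof.
by move=> sAB; apply/subsetP => g; rewrite !inE => /andP[sA dA]; rewrite !(subsetP sAB).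
Qed.

Lemma zsum_Ein_le (x : E -> R) A : in_PST x -> A != set0 ->
  zsum x (Ein A) <= (#|A|)%:R - 1.
Proof.
move=> [_ [x_Ein x_E]] A0; have [->|AT] := eqVneq A setT; last exact: x_Ein.
have -> : Ein setT = setT by apply/setP => e; rewrite !inE.
by rewrite cardsT x_E.
Qed.

Lemma ind_Ein_supermodular A B g :
  ind (Ein A) g + ind (Ein B) g <= ind (Ein (A :&: B)) g + ind (Ein (A :|: B)) g.
Proof.
rewrite /ind !inE.
by case: (src g \in A); case: (dst g \in A); case: (src g \in B);
   case: (dst g \in B) => /=; lra.
Qed.

Lemma tight_uncross (x : E -> R) A B : in_PST x -> tight x A -> tight x B ->
  A :&: B != set0 ->
  [/\ tight x (A :&: B), tight x (A :|: B) &
      forall g, 0 < x g -> ind (Ein A) g + ind (Ein B) g =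
                           ind (Ein (A :&: B)) g + ind (Ein (A :|: B)) g].
Proof.
move=> x_PST /andP[A0 /eqP tA] /andP[_ /eqP tB] AB0.
have AuB0 : A :|: B != set0 by rewrite setU_eq0 negb_and A0.
pose gap g := ind (Ein (A :&: B)) g + ind (Ein (A :|: B)) g
              - (ind (Ein A) g + ind (Ein B) g).
have gap_ge0 g : 0 <= gap g * x g.
  by rewrite mulr_ge0 ?x_PST.1 // subr_ge0 ind_Ein_supermodular.
have sum_gap : \sum_g gap g * x g = zsum x (Ein (A :&: B)) + zsum x (Ein (A :|: B))
    - (zsum x (Ein A) + zsum x (Ein B)).
  rewrite !zsum_dot /dot -!big_split -sumrB.
  by apply: eq_bigr => g _; rewrite /gap /=; ring.
have card_AB : (#|A :|: B|)%:R + (#|A :&: B|)%:R = (#|A|)%:R + (#|B|)%:R :> R.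
  by rewrite -!natrD cardsUI.
have := zsum_Ein_le x_PST AB0; have := zsum_Ein_le x_PST AuB0.
have : 0 <= \sum_g gap g * x g by apply: sumr_ge0.
rewrite sum_gap tA tB => sum_ge0 U_le I_le.
have tI : zsum x (Ein (A :&: B)) = (#|A :&: B|)%:R - 1 by lra.
have tU : zsum x (Ein (A :|: B)) = (#|A :|: B|)%:R - 1 by lra.
split; [by rewrite /tight AB0 tI eqxx|by rewrite /tight AuB0 tU eqxx|].
move=> g xg_gt0; have : gap g * x g = 0.
  apply: (@psumr_eq0P _ _ predT (fun h => gap h * x h)) => //.
  by rewrite sum_gap tI tU tA tB; lra.
by move/eqP; rewrite mulf_eq0 (gt_eqF xg_gt0) orbF /gap subr_eq0 eq_sym => /eqP.
Qed.

Lemma laminarP (F : {set {set V}}) A B : laminar F -> A \in F -> B \in F ->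
  [|| A \subset B, B \subset A | [disjoint A & B]].
Proof. by move=> /forallP/(_ A)/implyP FA /FA/forallP/(_ B)/implyP FB /FB. Qed.

Lemma child_exists (L : {set {set V}}) A N : N \in L -> N \proper A ->
  exists2 M, child L A M & N \subset M.
Proof.
move=> NL NA; pose P X := [&& X \in L, N \subset X & X \proper A].
have PN : P N by rewrite /P NL subxx NA.
have [M /and3P[ML NM MA] M_max] := @arg_maxnP _ N P (fun X => #|X|) PN.
exists M => //; rewrite /child ML MA /=; apply/existsP => -[N' /and3P[N'L MN' N'A]].
have := M_max N'; rewrite /P N'L N'A (subset_trans NM (proper_sub MN')) => /(_ isT).
by apply/negP; rewrite -ltnNge proper_card.
Qed.

Lemma EL_Ein (L : {set {set V}}) A N g : laminar L -> A \in L -> N \in L ->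
  g \in EL src dst L A -> (g \in Ein N) = (A \subset N).
Proof.
move=> L_lam AL NL; rewrite inE => /andP[gA /forallP g_children].
have [sAN|nsAN] := boolP (A \subset N); first exact: subsetP (Ein_subset sAN) g gA.
have := laminarP L_lam NL AL; rewrite (negbTE nsAN) /= => /orP[sNA|dNA].
  have NA : N \proper A by rewrite properE sNA.
  have [M cM NM] := child_exists NL NA.
  apply: contraNF (implyP (g_children M) cM); exact: subsetP (Ein_subset NM) g.
by move: gA; rewrite !inE => /andP[sA _]; rewrite (disjointFl dNA sA).
Qed.

Lemma laminar_decomposition_mem (x : E -> R) L T :
  laminar_decomposition src dst x L -> tight x T ->
  (forall N, N \in L -> ~~ crosses T N) -> T \in L.
Proof.
move=> [/andP[L_lam /forallP L_tight] L_max] tT T_nc.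
suff <- : T |: L = L by rewrite setU11.
apply: L_max (subsetUr _ _); apply/andP; split; last first.
  by apply/forallP => B; rewrite in_setU1; case: eqP => [->|_] //=; apply: L_tight.
apply/forallP => A; apply/implyP; rewrite in_setU1 => /predU1P[->|AL];
  apply/forallP => B; apply/implyP; rewrite in_setU1 => /predU1P[->|BL].
- by rewrite subxx.
- move: (T_nc B BL); rewrite /crosses.
  by case: (T \subset B); case: (B \subset T); case: [disjoint T & B].
- move: (T_nc A AL); rewrite /crosses disjoint_sym.
  by case: (T \subset A); case: (A \subset T); case: [disjoint A & T].
- exact: laminarP L_lam AL BL.
Qed.

Lemma tight_Ein_EL (x : E -> R) L A e f :
  in_PST x -> laminar_decomposition src dst x L -> A \in L ->
  e \in EL src dst L A -> f \in EL src dst L A -> 0 < x e -> 0 < x f ->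
  forall T, tight x T -> ind (Ein T) e = ind (Ein T) f.
Proof.
move=> x_PST L_dec AL eA fA xe_gt0 xf_gt0.
have [/andP[L_lam /forallP L_tight] _] := L_dec.
have ind_L N : N \in L -> ind (Ein N) e = ind (Ein N) f.
  by move=> NL; rewrite /ind (EL_Ein L_lam AL NL eA) (EL_Ein L_lam AL NL fA).
pose crossing T := [set N in L | crosses T N].
move=> T; have [n] := ubnP #|crossing T|; elim: n T => // n IH T cT_lt tT.
have [/existsP[N /andP[NL cTN]]|T_nc] := boolP [exists N in L, crosses T N]; last first.
  apply/ind_L/(laminar_decomposition_mem L_dec tT) => N NL.
  by apply: contra T_nc => cTN; apply/existsP; exists N; rewrite NL.
have tN : tight x N by have := L_tight N; rewrite NL.
have TN0 : ~~ [disjoint T & N] by case/and3P: cTN.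
have TN_neq0 : T :&: N != set0 by rewrite setI_eq0.
have [tI tU ind_uncross] := tight_uncross x_PST tT tN TN_neq0.
have fewer T' : (forall M, M \in L -> crosses T' M -> crosses T M) ->
    ~~ crosses T' N -> (#|crossing T'| < n)%N.
  move=> T'_sub T'N; apply: (@leq_trans #|crossing T|) => //.
  apply: proper_card; rewrite properE; apply/andP; split.
    by apply/subsetP => M; rewrite !inE => /andP[ML cM]; rewrite ML T'_sub.
  by apply/subsetP => /(_ N); rewrite !inE NL cTN (negbTE T'N) => /(_ isT).
have eqI := IH _ (fewer _ (fun M ML => crosses_setI_laminar (laminarP L_lam NL ML))
                   (crosses_setIr T N)) tI.
have eqU := IH _ (fewer _ (fun M ML => crosses_setU_laminar TN0 (laminarP L_lam NL ML))
                   (crosses_setUr T N)) tU.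
have := ind_uncross e xe_gt0; have := ind_uncross f xf_gt0; have := ind_L N NL.
lra.
Qed.

Lemma shift_mass_in_PST (x : E -> R) e f : in_PST x -> e != f -> 0 < x f ->
  (forall T, tight x T -> ind (Ein T) e = ind (Ein T) f) ->
  exists2 eta, 0 < eta & in_PST (shift_mass x eta e f).
Proof.
move=> x_PST ef xf_gt0 tight_ef; have [x_ge0 [x_Ein x_E]] := x_PST.
pose slack A := (#|A|)%:R - 1 - zsum x (Ein A).
have [A /andP[A0 ntA]|eta0 eta0_gt0 eta0_le] := @exists_pos_lower_bound _ _
    (fun A => (A != set0) && ~~ tight x A) slack.
  rewrite /slack subr_gt0 lt_neqAle zsum_Ein_le // andbT.
  by apply: contraNneq ntA => tA; rewrite /tight A0 tA eqxx.
exists (Num.min eta0 (x f)); first by rewrite lt_min eta0_gt0.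
have eta_le1 : Num.min eta0 (x f) <= eta0 by rewrite ge_min lexx.
have eta_le2 : Num.min eta0 (x f) <= x f by rewrite ge_min lexx orbT.
have ind_diff_le1 F : ind F e - ind F f <= 1.
  by rewrite /ind; case: (e \in F); case: (f \in F); rewrite /=; lra.
have eta_ge0 : 0 <= Num.min eta0 (x f) by rewrite le_min (ltW eta0_gt0) ltW.
split; [|split].
- move=> g; rewrite /shift_mass /ind !inE; have := x_ge0 g.
  have [->|ge] := eqVneq g e; first by rewrite (negbTE ef) /=; lra.
  by have [->|gf] := eqVneq g f; rewrite /=; lra.
- move=> A A0 AT; rewrite !zsum_dot dot_shift_mass -zsum_dot.
  have [tA|ntA] := boolP (tight x A).
    by rewrite tight_ef // subrr mulr0 addr0 x_Ein.
  have := eta0_le A; rewrite A0 ntA /slack => /(_ isT).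
  have := ind_diff_le1 (Ein A); nra.
- by rewrite !zsum_dot dot_shift_mass -zsum_dot /ind !inE subrr mulr0 addr0.
Qed.

End TightSets.

Lemma cy_le_of_EL (R : realType) (V E : finType) (src dst : E -> V)
    (c : E -> R) (l : nat) (S : 'I_l -> {set V}) (b : 'I_l -> int)
    (lam : R) (xs : E -> R) (ys : 'I_l -> R) (L : {set {set V}}) A e f :
  (forall e, 0 <= c e) ->
  optimal_P src dst c S b lam xs -> optimal_dual src dst c S b lam ys ->
  laminar_decomposition src dst xs L -> A \in L ->
  e \in EL src dst L A -> f \in EL src dst L A -> 0 < xs e -> 0 < xs f ->
  cy src dst c S ys f <= cy src dst c S ys e.
Proof.
move=> c_ge0 xs_opt ys_opt L_dec AL eA fA xe_gt0 xf_gt0.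
have [->|ef] := eqVneq e f; first exact: lexx.
have xs_PST := xs_opt.1.1.
have [eta eta_gt0 x'_PST] := shift_mass_in_PST xs_PST ef xf_gt0
  (tight_Ein_EL xs_PST L_dec AL eA fA xe_gt0 xf_gt0).
have := opt_le_g_lam xs_opt ys_opt.
have := g_lam_le_lagrangian S b lam c_ge0 ys_opt.1 x'_PST.
have := lagrangian_le_cost c ys_opt.1 xs_opt.1.
rewrite lagrangian_shift_mass => le_cost g_le opt_le.
by rewrite -subr_ge0 -(pmulr_rge0 _ eta_gt0); lra.
Qed.

Theorem lemma5 (R : realType) (V E : finType) (src dst : E -> V)
    (c : E -> R) (l : nat) (S : 'I_l -> {set V}) (b : 'I_l -> int)
    (lam : R) (xs : E -> R) (ys : 'I_l -> R) (L : {set {set V}}) :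
  loopless src dst ->
  connected_graph src dst ->
  (forall e, 0 <= c e) ->
  is_chain S ->
  1 <= lam ->
  optimal_P src dst c S b lam xs ->
  optimal_dual src dst c S b lam ys ->
  laminar_decomposition src dst xs L ->
  forall A, A \in L ->
  forall e f, e \in EL src dst L A -> f \in EL src dst L A ->
    0 < xs e -> 0 < xs f ->
    cy src dst c S ys e = cy src dst c S ys f.
Proof.
move=> _ _ c_ge0 _ _ xs_opt ys_opt L_dec A AL e f eA fA xe_gt0 xf_gt0.
by apply/le_anti; rewrite !(cy_le_of_EL c_ge0 xs_opt ys_opt L_dec AL).
Qed.
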